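(* Let $R$ be a ring and $\mathfrak{p}$ a proper left ideal of $R$. Then: (1) $\mathfrak{p}$ is extremely prime iff $(\mathfrak{p}:b)\subseteq\mathfrak{p}$ for all $b\in R\setminus\mathfrak{p}$. (2) $\mathfrak{p}$ is completely prime iff $(\mathfrak{p}:b)=\mathfrak{p}$ for all $b\in R\setminus\mathfrak{p}$ such that $\mathfrak{p}\subseteq(\mathfrak{p}:b)$. (3) $\mathfrak{p}$ is structurally prime iff $\operatorname{id}((\mathfrak{p}:b))\subseteq\mathfrak{p}$ for all $b\in R\setminus\mathfrak{p}$. (4) $\mathfrak{p}$ is weakly prime iff $\operatorname{id}((\mathfrak{p}:b))\subseteq\mathfrak{p}$ for all $b\in R\setminus\mathfrak{p}$ such that $\mathfrak{p}R\subseteq(\mathfrak{p}:b)$.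
   Context: Rings are associative and unital, not necessarily commutative. For a left ideal $I$ and $a\in R$, $(I:a)=\{x\in R: xa\in I\}$ (a left ideal). For a left ideal $I$, $\operatorname{id}(I)$ denotes the largest two-sided ideal of $R$ contained in $I$. A left ideal $\mathfrak{p}\neq R$ is: extremely prime if $ab\in\mathfrak{p}$ implies $a\in\mathfrak{p}$ or $b\in\mathfrak{p}$ (for $a,b\in R$); completely prime if $ab\in\mathfrak{p}$ and $\mathfrak{p}b\subseteq\mathfrak{p}$ imply $a\in\mathfrak{p}$ or $b\in\mathfrak{p}$; structurally prime if for left ideals $A,B$, $AB\subseteq\mathfrak{p}$ implies $A\subseteq\mathfrak{p}$ or $B\subseteq\mathfrak{p}$; weakly prime if for left ideals $A,B$, $AB\subseteq\mathfrak{p}$ and $\mathfrak{p}B\subseteq\mathfrak{p}$ imply $A\subseteq\mathfrak{p}$ or $B\subseteq\mathfrak{p}$. *)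

From mathcomp Require Import all_boot all_algebra.
Set Implicit Arguments. Unset Strict Implicit. Unset Printing Implicit Defensive.
Import GRing.Theory.
Local Open Scope ring_scope.

Section Defs.
Variable R : pzRingType.
Implicit Types (A B I J : R -> Prop).

Definition subsetR A B : Prop := forall x, A x -> B x.

Definition left_ideal I : Prop :=
  [/\ I 0, (forall x y, I x -> I y -> I (x + y)) & (forall r x, I x -> I (r * x))].

Definition two_sided_ideal I : Prop :=
  [/\ I 0, (forall x y, I x -> I y -> I (x + y)),
      (forall r x, I x -> I (r * x)) & (forall r x, I x -> I (x * r))].

Definition proper_lideal I : Prop := exists x, ~ I x.

Definition set_mul A B : R -> Prop := fun x =>
  exists s : seq (R * R),
    (forall p, p \in s -> A p.1 /\ B p.2) /\ x = \sum_(p <- s) p.1 * p.2.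

Definition mul_full A : R -> Prop := set_mul A (fun _ => True).

Definition colon I (a : R) : R -> Prop := fun x => I (x * a).

(* id(I): the largest two-sided ideal contained in I, realized as the union
   of all two-sided ideals contained in I. *)
Definition id_core I : R -> Prop := fun x =>
  exists J, two_sided_ideal J /\ subsetR J I /\ J x.

Definition extremely_prime P : Prop :=
  proper_lideal P /\ forall a b, P (a * b) -> P a \/ P b.

Definition completely_prime P : Prop :=
  proper_lideal P /\ forall a b, P (a * b) -> (forall x, P x -> P (x * b)) -> P a \/ P b.

Definition structurally_prime P : Prop :=
  proper_lideal P /\ forall A B, left_ideal A -> left_ideal B ->
    subsetR (set_mul A B) P -> subsetR A P \/ subsetR B P.

Definition weakly_prime P : Prop :=
  proper_lideal P /\ forall A B, left_ideal A -> left_ideal B ->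
    subsetR (set_mul A B) P -> subsetR (set_mul P B) P ->
    subsetR A P \/ subsetR B P.
End Defs.

(* For the element
   conditions, [ab ∈ p] says exactly that [a ∈ (p : b)].  For the ideal
   conditions, if [AB ⊆ p] and [b ∈ B \ p], then [AR] is a two-sided ideal
   contained in [(p : b)] and containing [A], so [A ⊆ id((p : b))];
   conversely a two-sided ideal [J ⊆ (p : b)] satisfies [J(Rb) ⊆ p] while
   [Rb ⊄ p], so primeness applied to [J] and [Rb] forces [J ⊆ p]. *)
From mathcomp Require Import all_boot all_algebra.
From Stdlib Require Import Classical.
Local Open Scope ring_scope.
Import GRing.Theory.
Set Implicit Arguments.
Unset Strict Implicit.

Section LeftIdeals.
Variable R : pzRingType.
Implicit Types (P A B J : R -> Prop) (a b : R).

Definition principal_lideal b : R -> Prop := fun y => exists r, y = r * b.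

Lemma principal_lidealP b : left_ideal (principal_lideal b).
Proof.
split.
- by exists 0; rewrite mul0r.
- by move=> _ _ [r ->] [t ->]; exists (r + t); rewrite mulrDl.
- by move=> r _ [t ->]; exists (r * t); rewrite mulrA.
Qed.

Lemma principal_lideal_id b : principal_lideal b b.
Proof. by exists 1; rewrite mul1r. Qed.

Lemma two_sided_left_ideal J : two_sided_ideal J -> left_ideal J.
Proof. by case. Qed.

Lemma not_subsetR A B : ~ subsetR A B -> exists2 a, A a & ~ B a.
Proof.
move=> nAB; apply: NNPP => no_witness; apply: nAB => a Aa.
by apply: NNPP => nBa; apply: no_witness; exists a.
Qed.

Lemma left_ideal_sum P (T : eqType) (s : seq T) (f : T -> R) :
  left_ideal P -> (forall t, t \in s -> P (f t)) -> P (\sum_(t <- s) f t).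
Proof.
move=> [P0 PD _]; elim: s => [|t s IHs] Ps; first by rewrite big_nil.
rewrite big_cons; apply: PD; first by apply: Ps; rewrite mem_head.
by apply: IHs => u us; apply: Ps; rewrite inE us orbT.
Qed.

Lemma set_mul1 A B a b : A a -> B b -> set_mul A B (a * b).
Proof.
move=> Aa Bb; exists [:: (a, b)]; split; last by rewrite big_seq1.
by move=> p; rewrite inE => /eqP ->.
Qed.

Lemma set_mul_subset P A B :
  left_ideal P -> (forall a b, A a -> B b -> P (a * b)) ->
  subsetR (set_mul A B) P.
Proof.
move=> hP AB_P _ [s [Hs ->]]; apply: left_ideal_sum => // p /Hs[]; exact: AB_P.
Qed.

Lemma subset_mul_full A : subsetR A (mul_full A).
Proof. by move=> a Aa; rewrite -[a]mulr1; apply: set_mul1. Qed.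

Lemma mul_full_two_sided A : left_ideal A -> two_sided_ideal (mul_full A).
Proof.
move=> [_ _ AM]; split.
- by exists [::]; split => //; rewrite big_nil.
- move=> _ _ [s [Hs ->]] [t [Ht ->]]; exists (s ++ t); split; last by rewrite big_cat.
  by move=> p; rewrite mem_cat => /orP[/Hs|/Ht].
- move=> r _ [s [Hs ->]]; exists [seq (r * p.1, p.2) | p <- s]; split.
    by move=> _ /mapP[q /Hs[Aq _] ->]; split => //; apply: AM.
  by rewrite big_map big_distrr /=; apply: eq_bigr => p _; rewrite mulrA.
- move=> r _ [s [Hs ->]]; exists [seq (p.1, p.2 * r) | p <- s]; split.
    by move=> _ /mapP[q /Hs[Aq _] ->].
  by rewrite big_map big_distrl /=; apply: eq_bigr => p _; rewrite mulrA.
Qed.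

Lemma mul_full_subset_colon P A B b :
  left_ideal P -> left_ideal B -> B b -> subsetR (set_mul A B) P ->
  subsetR (mul_full A) (colon P b).
Proof.
move=> hP [_ _ BM] Bb AB_P _ [s [Hs ->]]; rewrite /colon big_distrl.
apply: left_ideal_sum => // p /Hs[Ap _]; rewrite /= -mulrA.
by apply: AB_P; apply: set_mul1 => //; apply: BM.
Qed.

Lemma subset_id_core_colon P A B b :
  left_ideal P -> left_ideal A -> left_ideal B -> B b ->
  subsetR (set_mul A B) P -> subsetR A (id_core (colon P b)).
Proof.
move=> hP hA hB Bb AB_P a Aa; exists (mul_full A); split.
  exact: mul_full_two_sided.
by split; [exact: (mul_full_subset_colon hP hB Bb AB_P) | exact: subset_mul_full].
Qed.

Lemma set_mul_principal_subset P A b :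
  left_ideal P -> (forall a r, A a -> colon P b (a * r)) ->
  subsetR (set_mul A (principal_lideal b)) P.
Proof.
move=> hP Ab_P; apply: set_mul_subset => // a _ Aa [r ->].
by rewrite mulrA; apply: Ab_P.
Qed.

Lemma two_sided_mul_principal_subset P J b :
  left_ideal P -> two_sided_ideal J -> subsetR J (colon P b) ->
  subsetR (set_mul J (principal_lideal b)) P.
Proof.
move=> hP [_ _ _ JM] J_Pb; apply: set_mul_principal_subset => // a r Ja.
by apply: J_Pb; apply: JM.
Qed.

Lemma extremely_prime_colon P :
  proper_lideal P ->
  extremely_prime P <-> forall b, ~ P b -> subsetR (colon P b) P.
Proof.
move=> Pprop; split=> [[_ Pprime] b nPb a /Pprime[]//|Pcolon].
split=> // a b Pab; have [Pb|nPb] := classic (P b); first by right.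
by left; apply: (Pcolon b nPb).
Qed.

Lemma completely_prime_colon P :
  proper_lideal P ->
  completely_prime P <->
    forall b, ~ P b -> subsetR P (colon P b) -> forall x, colon P b x <-> P x.
Proof.
move=> Pprop; split=> [[_ Pprime] b nPb Pb_P x|Pcolon].
  by split=> [/Pprime /(_ Pb_P) []|/Pb_P].
split=> // a b Pab Pb_P; have [Pb|nPb] := classic (P b); first by right.
by left; apply/(Pcolon b nPb Pb_P).
Qed.

Lemma structurally_prime_id_core_colon P :
  left_ideal P -> proper_lideal P ->
  structurally_prime P <->
    forall b, ~ P b -> subsetR (id_core (colon P b)) P.
Proof.
move=> hP Pprop; split=> [[_ Pprime] b nPb x [J [hJ [J_Pb Jx]]]|Pcolon].
  have JRb_P := two_sided_mul_principal_subset hP hJ J_Pb.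
  have [/(_ x Jx)//|Rb_P] :=
    Pprime _ _ (two_sided_left_ideal hJ) (principal_lidealP b) JRb_P.
  by case: nPb; apply: Rb_P; apply: principal_lideal_id.
split=> // A B hA hB AB_P.
have [|/not_subsetR[b Bb nPb]] := classic (subsetR B P); first by right.
left=> a Aa; apply: (Pcolon b nPb).
exact: (subset_id_core_colon hP hA hB Bb AB_P).
Qed.

Lemma weakly_prime_id_core_colon P :
  left_ideal P -> proper_lideal P ->
  weakly_prime P <->
    forall b, ~ P b -> subsetR (mul_full P) (colon P b) ->
      subsetR (id_core (colon P b)) P.
Proof.
move=> hP Pprop; split=> [[_ Pprime] b nPb PR_Pb x [J [hJ [J_Pb Jx]]]|Pcolon].
  have JRb_P := two_sided_mul_principal_subset hP hJ J_Pb.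
  have PRb_P : subsetR (set_mul P (principal_lideal b)) P.
    by apply: set_mul_principal_subset => // p r Pp; apply: PR_Pb; apply: set_mul1.
  have [/(_ x Jx)//|Rb_P] :=
    Pprime _ _ (two_sided_left_ideal hJ) (principal_lidealP b) JRb_P PRb_P.
  by case: nPb; apply: Rb_P; apply: principal_lideal_id.
split=> // A B hA hB AB_P PB_P.
have [|/not_subsetR[b Bb nPb]] := classic (subsetR B P); first by right.
left=> a Aa; apply: (Pcolon b nPb).
  exact: (mul_full_subset_colon hP hB Bb PB_P).
exact: (subset_id_core_colon hP hA hB Bb AB_P).
Qed.

End LeftIdeals.

Theorem proposition2p25 (R : pzRingType) (P : R -> Prop) :
  left_ideal P -> proper_lideal P ->
  [/\ (extremely_prime P <->
         forall b, ~ P b -> subsetR (colon P b) P),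
      (completely_prime P <->
         forall b, ~ P b -> subsetR P (colon P b) ->
           forall x, colon P b x <-> P x),
      (structurally_prime P <->
         forall b, ~ P b -> subsetR (id_core (colon P b)) P)
    & (weakly_prime P <->
         forall b, ~ P b -> subsetR (mul_full P) (colon P b) ->
           subsetR (id_core (colon P b)) P)].
Proof.
move=> hP Pprop; split.
- exact: extremely_prime_colon.
- exact: completely_prime_colon.
- exact: structurally_prime_id_core_colon.
- exact: weakly_prime_id_core_colon.
Qed.
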